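(* Let $\mathcal R^{rrc}$ be a rich single-crossing domain of restricted classical preferences and $R',R''\in\mathcal R^{rrc}$ distinct. If $R''$ cuts $R'$ from above (at the bundles $(t,q)$ with $q>0$ and $t<\min\{t_{R'},t_{R''}\}$), then $t_{R'}<t_{R''}$.
   Context: $(t',q')<(t'',q'')$ means $t'<t''$, $q'<q''$; $x\le y$ means $x=y$ or $x<y$; $\square(z)=\{x:x\le z\}$. A restricted classical preference is a complete transitive relation $R$ (strict part $P$, indifference $I$) on $[0,t_R]\times[0,1]$, with a unique payment bound $0<t_R<\infty$, such that: (money-monotone) for all $q\in(0,1]$, $t_R\ge t''>t'\ge0$ implies $(t',q)P(t'',q)$; ($q$-monotone) for all $t\in[0,t_R)$, $1\ge q''>q'\ge0$ implies $(t,q'')P(t,q')$; (0-equivalence) $(0,0)I(t_R,q)$ for all $q\in[0,1]$ and $(0,0)I(t,0)$ for all $t\in[0,t_R)$; and $R$ is continuous (closed upper and lower contour sets) on $[0,t_R]\times[0,1]$. Two restricted classical preferences $R',R''$ with $t_{R'}\ne t_{R''}$ satisfy single-crossing if for every $(t,q)$ with $q>0$, $t<\min\{t_{R'},t_{R''}\}$, the indifference sets of $R'$ and $R''$ through $(t,q)$ meet only at $(t,q)$; $R''$ cuts $R'$ from above at such $(t,q)$ if $\square(t,q)\cap\{x:xR''(t,q)\}\subseteq\square(t,q)\cap\{x:xR'(t,q)\}$. A rich single-crossing domain $\mathcal R^{rrc}$ of restricted classical preferences is a set of pairwise single-crossing restricted classical preferences such that for all $x'<x''$ there is a member $R$ with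 $x'Ix''$. *)

From HB Require Import structures.
From mathcomp Require Import all_boot all_order all_algebra.
From mathcomp Require Import all_classical all_reals all_analysis.
Import numFieldNormedType.Exports.
Set Implicit Arguments. Unset Strict Implicit. Unset Printing Implicit Defensive.
Import Order.TTheory GRing.Theory Num.Theory.
Local Open Scope ring_scope.
Local Open Scope classical_set_scope.

(* A (candidate) preference: a payment bound t_R and a weak preference
   relation R (x R y : "x is at least as good as y"); only its restriction
   to the consumption set [0,t_R] x [0,1] matters. *)
Record pref (R : realType) := Pref { tb : R ; wp : R * R -> R * R -> Prop }.

Section Defs.
Variable R : realType.
Implicit Types (p : pref R) (x y z : R * R).

Definition dom p x : Prop := (0 <= x.1 <= tb p) /\ (0 <= x.2 <= 1).
Definition sP p x y : Prop := wp p x y /\ ~ wp p y x.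
Definition sI p x y : Prop := wp p x y /\ wp p y x.

Definition lt2 x y : Prop := x.1 < y.1 /\ x.2 < y.2.
Definition le2 x y : Prop := x = y \/ lt2 x y.

Definition restricted_classical p : Prop :=
  0 < tb p /\
  (forall x y, dom p x -> dom p y -> wp p x y \/ wp p y x) /\
  (forall x y z, dom p x -> dom p y -> dom p z ->
     wp p x y -> wp p y z -> wp p x z) /\
  (forall q t' t'', 0 < q <= 1 -> 0 <= t' -> t' < t'' -> t'' <= tb p ->
     sP p (t', q) (t'', q)) /\
  (forall t q' q'', 0 <= t < tb p -> 0 <= q' -> q' < q'' -> q'' <= 1 ->
     sP p (t, q'') (t, q')) /\
  (forall q, 0 <= q <= 1 -> sI p (0, 0) (tb p, q)) /\
  (forall t, 0 <= t < tb p -> sI p (0, 0) (t, 0)) /\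
  (forall y, dom p y ->
     closed [set x | dom p x /\ wp p x y] /\
     closed [set x | dom p x /\ wp p y x]).

Definition single_crossing p1 p2 : Prop :=
  tb p1 <> tb p2 /\
  forall t q, 0 < q <= 1 -> 0 <= t -> t < tb p1 -> t < tb p2 ->
    forall x, dom p1 x -> dom p2 x -> sI p1 x (t, q) -> sI p2 x (t, q) ->
      x = (t, q).

(* p2 (= R'') cuts p1 (= R') from above at z:
   box(z) ∩ {x : x R'' z} ⊆ box(z) ∩ {x : x R' z} *)
Definition cuts_from_above p2 p1 z : Prop :=
  forall x, le2 x z -> dom p2 x -> wp p2 x z -> dom p1 x /\ wp p1 x z.

Definition rich_sc_domain (S : set (pref R)) : Prop :=
  (forall p, S p -> restricted_classical p) /\
  (forall p1 p2, S p1 -> S p2 -> p1 <> p2 -> single_crossing p1 p2) /\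
  (forall x' x'', 0 <= x'.1 -> 0 <= x'.2 -> x''.2 <= 1 -> lt2 x' x'' ->
     exists p, S p /\ dom p x' /\ dom p x'' /\ sI p x' x'').

End Defs.

From HB Require Import structures.
From mathcomp Require Import all_boot all_order all_algebra.
From mathcomp Require Import all_classical all_reals all_analysis.
From mathcomp Require Import lra.
Set Implicit Arguments. Unset Strict Implicit. Unset Printing Implicit Defensive.
Import numFieldNormedType.Exports.
Import Order.TTheory GRing.Theory Num.Theory.
Local Open Scope ring_scope.
Local Open Scope classical_set_scope.

(* Single-crossing forces t_R' <> t_R''; suppose t_R'' < t_R' and write
   a = t_R''.  For R'' the bundle (0,q) is strictly better than (0,0) ~ (a,1),
   hence (by continuity) than every (t,1) with t < a close to a.  For R', whose
   payment bound exceeds a, the bundle (a,1/2) lies strictly between (a,1) and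
   (a,0) ~ (0,0), so (t,1) is strictly better than (a,1/2), which is strictly
   better than (0,q) for small q.  Since (0,q) < (t,1), cutting from above
   transfers (0,q) R'' (t,1) to (0,q) R' (t,1): a contradiction. *)

Lemma closed_notin_near (R : realType) (A : set (R * R)) (z : R * R) :
  closed A -> ~ A z -> exists2 e : R, 0 < e &
  forall x, `|x.1 - z.1| < e -> `|x.2 - z.2| < e -> ~ A x.
Proof.
move=> cA nAz; have : open (~` A) by exact: closed_openC.
rewrite openE => /(_ z nAz) /nbhs_ballP [e e0 he].
exists e => // x hx1 hx2; apply: he.
by split; rewrite /ball /= distrC.
Qed.

Lemma exists_near_left (R : realType) (c d e : R) :
  c < d -> 0 < e -> exists t, c < t < d /\ `|t - d| < e.
Proof.
move=> cd e0; pose m := Num.min (d - c) e.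
have m0 : 0 < m by rewrite lt_min subr_gt0 cd e0.
have [mdc me] : m <= d - c /\ m <= e by split; rewrite ge_min lexx ?orbT.
exists (d - m / 2); split; first (apply/andP; split; lra).
by rewrite ltr_norml; apply/andP; split; lra.
Qed.

Lemma exists_near_right (R : realType) (c d e : R) :
  c < d -> 0 < e -> exists t, c < t < d /\ `|t - c| < e.
Proof.
move=> cd e0; have ndc : - d < - c by rewrite ltrN2.
have [t [/andP [t1 t2] te]] := exists_near_left ndc e0.
exists (- t); split; first (apply/andP; split; lra).
by rewrite -opprD normrN -[c]opprK.
Qed.

Section RestrictedClassical.
Variables (R : realType) (p : pref R).
Hypothesis hp : restricted_classical p.
Implicit Types (x y z : R * R).

Lemma rc_tb_gt0 : 0 < tb p.
Proof. by case: hp. Qed.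

Lemma rc_total x y : dom p x -> dom p y -> wp p x y \/ wp p y x.
Proof. by case: hp => _ [htot _]; exact: htot. Qed.

Lemma rc_trans x y z : dom p x -> dom p y -> dom p z ->
  wp p x y -> wp p y z -> wp p x z.
Proof. by case: hp => _ [_ [htr _]]; exact: htr. Qed.

Lemma rc_qmono t q' q'' : 0 <= t < tb p -> 0 <= q' -> q' < q'' -> q'' <= 1 ->
  sP p (t, q'') (t, q').
Proof. by case: hp => _ [_ [_ [_ [hq _]]]]; exact: hq. Qed.

Lemma rc_zero_tb q : 0 <= q <= 1 -> sI p (0, 0) (tb p, q).
Proof. by case: hp => _ [_ [_ [_ [_ [hz _]]]]]; exact: hz. Qed.

Lemma rc_zero_q0 t : 0 <= t < tb p -> sI p (0, 0) (t, 0).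
Proof. by case: hp => _ [_ [_ [_ [_ [_ [hz _]]]]]]; exact: hz. Qed.

Lemma rc_closed_upper y : dom p y -> closed [set x | dom p x /\ wp p x y].
Proof. by case: hp => _ [_ [_ [_ [_ [_ [_ hc]]]]]] /hc []. Qed.

Lemma rc_closed_lower y : dom p y -> closed [set x | dom p x /\ wp p y x].
Proof. by case: hp => _ [_ [_ [_ [_ [_ [_ hc]]]]]] /hc []. Qed.

Lemma sI_sym x y : sI p x y -> sI p y x.
Proof. by case. Qed.

Lemma sP_sI_trans x y z : dom p x -> dom p y -> dom p z ->
  sP p x y -> sI p y z -> sP p x z.
Proof.
move=> dx dy dz [xy nyx] [yz zy]; split; first exact: (rc_trans dx dy dz).
by move=> zx; apply: nyx; exact: (rc_trans dy dz dx).
Qed.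

Lemma sI_sP_trans x y z : dom p x -> dom p y -> dom p z ->
  sI p x y -> sP p y z -> sP p x z.
Proof.
move=> dx dy dz [xy yx] [yz nzy]; split; first exact: (rc_trans dx dy dz).
by move=> zx; apply: nzy; exact: (rc_trans dz dx dy).
Qed.

Lemma sP_near_l x y : dom p x -> dom p y -> sP p x y ->
  exists2 e : R, 0 < e & forall x', dom p x' ->
    `|x'.1 - x.1| < e -> `|x'.2 - x.2| < e -> sP p x' y.
Proof.
move=> dx dy [_ nyx].
have [|e e0 he] := closed_notin_near (rc_closed_lower dy) (z := x); first by case.
exists e => // x' dx' h1 h2; have nyx' : ~ wp p y x' by move=> yx'; exact: (he x').
by split=> //; case: (rc_total dx' dy).
Qed.

Lemma sP_near_r x y : dom p x -> dom p y -> sP p y x ->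
  exists2 e : R, 0 < e & forall x', dom p x' ->
    `|x'.1 - x.1| < e -> `|x'.2 - x.2| < e -> sP p y x'.
Proof.
move=> dx dy [_ nxy].
have [|e e0 he] := closed_notin_near (rc_closed_upper dy) (z := x); first by case.
exists e => // x' dx' h1 h2; have nx'y : ~ wp p x' y by move=> x'y; exact: (he x').
by split=> //; case: (rc_total dx' dy).
Qed.

Lemma zero_price_beats_near_tb q : 0 < q <= 1 ->
  exists2 e : R, 0 < e & forall t, 0 <= t <= tb p ->
    `|t - tb p| < e -> sP p (0, q) (t, 1).
Proof.
move=> /andP [q0 q1]; have tb0 := rc_tb_gt0.
have dq : dom p (0, q) by split=> /=; apply/andP; split; lra.
have d00 : dom p (0, 0) by split=> /=; apply/andP; split; lra.
have dtb : dom p (tb p, 1) by split=> /=; apply/andP; split; lra.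
have /(sP_near_r dtb dq) [e e0 he] : sP p (0, q) (tb p, 1).
  apply: (sP_sI_trans dq d00 dtb); first by apply: rc_qmono => //; lra.
  by apply: rc_zero_tb; apply/andP; split; lra.
exists e => // t /andP [t0 t1] ht; apply: he => //=.
- by split=> /=; apply/andP; split; lra.
- by rewrite subrr normr0.
Qed.

Lemma full_beats_near a m : 0 <= a < tb p -> 0 <= m < 1 ->
  exists2 e : R, 0 < e & forall t, 0 <= t <= tb p ->
    `|t - a| < e -> sP p (t, 1) (a, m).
Proof.
move=> /andP [a0 atb] /andP [m0 m1].
have da1 : dom p (a, 1) by split=> /=; apply/andP; split; lra.
have dam : dom p (a, m) by split=> /=; apply/andP; split; lra.
have /(sP_near_l da1 dam) [e e0 he] : sP p (a, 1) (a, m).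
  by apply: rc_qmono; [apply/andP|..].
exists e => // t /andP [t0 t1] ht; apply: he => //=.
- by split=> /=; apply/andP; split; lra.
- by rewrite subrr normr0.
Qed.

Lemma beats_near_zero a m : 0 <= a < tb p -> 0 < m <= 1 ->
  exists2 e : R, 0 < e & forall q, 0 <= q <= 1 ->
    `|q| < e -> sP p (a, m) (0, q).
Proof.
move=> /andP [a0 atb] /andP [m0 m1].
have dam : dom p (a, m) by split=> /=; apply/andP; split; lra.
have da0 : dom p (a, 0) by split=> /=; apply/andP; split; lra.
have d00 : dom p (0, 0) by split=> /=; apply/andP; split; lra.
have /(sP_near_r d00 dam) [e e0 he] : sP p (a, m) (0, 0).
  apply: (sP_sI_trans dam da0 d00); first by apply: rc_qmono => //; apply/andP.
  by apply: sI_sym; apply: rc_zero_q0; apply/andP.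
exists e => // q /andP [q0 q1] hq; apply: he => /=.
- by split=> /=; apply/andP; split; lra.
- by rewrite subrr normr0.
- by rewrite subr0.
Qed.

End RestrictedClassical.

Theorem mainTheorem16 (R : realType) (S : set (pref R)) (p1 p2 : pref R) :
  rich_sc_domain S -> S p1 -> S p2 -> p1 <> p2 ->
  (forall t q, 0 < q <= 1 -> 0 <= t -> t < tb p1 -> t < tb p2 ->
     cuts_from_above p2 p1 (t, q)) ->
  tb p1 < tb p2.
Proof.
move=> [hrc [hsc _]] S1 S2 n12 hcut.
have rc1 := hrc _ S1; have rc2 := hrc _ S2.
have [hne _] := hsc _ _ S1 S2 n12.
case: (ltrgtP (tb p1) (tb p2)) => // lt21; have a0 := rc_tb_gt0 rc2.
have ha : 0 <= tb p2 < tb p1 by apply/andP; split; lra.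
have [e1 e10 hwx] := beats_near_zero rc1 ha (m := 1 / 2) ltac:(apply/andP; split; lra).
have [q [/andP [q0 q1] hq]] := @exists_near_right R 0 1 e1 ltr01 e10.
have [e2 e20 hxz] := zero_price_beats_near_tb rc2 (q := q) ltac:(apply/andP; split; lra).
have [e3 e30 hzw] := full_beats_near rc1 ha (m := 1 / 2) ltac:(apply/andP; split; lra).
have [|t [/andP [t0 ta] ht]] := @exists_near_left R 0 (tb p2) (Num.min e2 e3) a0.
  by rewrite lt_min e20 e30.
move: ht; rewrite lt_min => /andP [ht2 ht3].
have [x0z _] := hxz t ltac:(apply/andP; split; lra) ht2.
have [dx1 x0z1] : dom p1 (0, q) /\ wp p1 (0, q) (t, 1).
  apply: (hcut t 1 _ (ltW t0) _ ta (0, q)); first by rewrite ltr01 lexx.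
  - lra.
  - by right; split.
  - by split=> /=; apply/andP; split; lra.
  - exact: x0z.
have [zw _] := hzw t ltac:(apply/andP; split; lra) ht3.
have [_ nx0w] := hwx q ltac:(apply/andP; split; lra) ltac:(by rewrite -[q]subr0).
have dz1 : dom p1 (t, 1) by split=> /=; apply/andP; split; lra.
have dw1 : dom p1 (tb p2, 1 / 2) by split=> /=; apply/andP; split; lra.
by case: nx0w; exact: (rc_trans rc1 dx1 dz1 dw1 x0z1 zw).
Qed.
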